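(* Let $G$ be a group, $Z\leq Z(G)$, and let $\mathcal{C}$ be a $G/Z$-conjugacy class. Let $x\in G$ be such that the image of $x$ in $G/Z$ lies in $\mathcal{C}$, and denote by $\mathcal{C}_x$ the $G$-conjugacy class of $x$. If $\mathcal{K}(G,\mathcal{C}_x)$ is connected, then $\mathcal{K}(G/Z,\mathcal{C})$ is connected. Moreover, if the order $o$ of an element of $\mathcal{C}$ is prime to the order of $Z$, then $x$ can be taken to have order $o$.
   Context: For a group $H$ and a conjugacy class $\mathcal{D}$ of $H$, $\mathcal{K}(H,\mathcal{D})$ denotes the graph with vertex set $\mathcal{D}$ in which distinct $a,b\in\mathcal{D}$ are adjacent iff $C_H(ab)\cap\mathcal{D}\neq\emptyset$. *)

From mathcomp Require Import all_boot all_fingroup all_solvable.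
Set Implicit Arguments. Unset Strict Implicit. Unset Printing Implicit Defensive.
Local Open Scope group_scope.

Definition Kadj (gT : finGroupType) (H D : {set gT}) : rel gT :=
  fun a b => [&& a \in D, b \in D, a != b & 'C_H[a * b] :&: D != set0].

Definition Kconnected (gT : finGroupType) (H D : {set gT}) : Prop :=
  {in D &, forall a b, connect (Kadj H D) a b}.

From mathcomp Require Import all_boot all_fingroup all_solvable.
Local Open Scope group_scope.

(* The quotient map sends x^G onto C, and an edge a - b of K(G, x^G),
   witnessed by w centralising ab, to an edge (or a loop) of K(G/Z, C)
   witnessed by the image of w; so paths map to paths.  If y maps to c and
   #[c] is prime to |Z|, then y^k with k = 1 mod #[c] and k = 0 mod |Z| still
   maps to c, and y^(k #[c]) = (y^#[c])^k = 1 because y^#[c] lies in Z. *)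

Lemma connect_homo (T T' : finType) (e : rel T) (e' : rel T') (f : T -> T') :
  (forall u v, e u v -> connect e' (f u) (f v)) ->
  forall u v, connect e u v -> connect e' (f u) (f v).
Proof.
move=> homo_f u v /connectP [p e_p ->] {v}.
elim: p u e_p => [|w p IHp] u /=; first by rewrite connect0.
by case/andP=> /homo_f e'_uw /IHp; apply: connect_trans.
Qed.

Lemma class_eq_mem_classes {gT : finGroupType} {G : {group gT}} {C x} :
  C \in classes G -> x \in C -> C = x ^: G.
Proof. by case/imsetP=> y _ -> /class_eqP. Qed.

Section KgraphMorphism.

Variables (aT rT : finGroupType) (D : {group aT}) (f : {morphism D >-> rT}).
Variables (H A : {set aT}).
Hypotheses (sHD : H \subset D) (sAD : A \subset D).

Lemma Kadj_morphim u v :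
  Kadj H A u v -> connect (Kadj (f @* H) (f @* A)) (f u) (f v).
Proof.
case/and4P=> Au Av _ /set0Pn [w /setIP [/setIP [Hw cw] Aw]].
have [-> | ne_fuv] := eqVneq (f u) (f v); first by rewrite connect0.
have [Du Dv Dw] := And3 (subsetP sAD u Au) (subsetP sAD v Av) (subsetP sHD w Hw).
apply: connect1; apply/and4P; split; rewrite ?mem_morphim //.
apply/set0Pn; exists (f w); rewrite !in_setI !mem_morphim //= andbT -morphM //.
by apply/cent1P; rewrite /commute -!morphM ?groupM // (cent1P cw).
Qed.

Lemma Kconnected_morphim : Kconnected H A -> Kconnected (f @* H) (f @* A).
Proof.
move=> connHA _ _ /morphimP [u Du Au ->] /morphimP [v Dv Av ->].
exact: connect_homo Kadj_morphim _ _ (connHA u v Au Av).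
Qed.

End KgraphMorphism.

Lemma coset_lift_coprime_order {gT : finGroupType} {Z : {group gT}} {y} :
  y \in 'N(Z) -> coprime #[coset Z y] #|Z| ->
  exists2 x, x \in <[y]> & coset Z x = coset Z y /\ #[x] = #[coset Z y].
Proof.
set n := #[coset Z y] => Ny co_nZ.
pose k := chinese n #|Z| 1 0.
have cosetX : coset Z (y ^+ k) = coset Z y.
  by rewrite morphX // -expg_mod_order chinese_modl // expg_mod_order.
have Zyn : y ^+ n \in Z.
  by apply: coset_idr; rewrite ?groupX // morphX // expg_order.
exists (y ^+ k); first exact: mem_cycle.
split=> //; apply/eqP; rewrite eqn_dvd {2}/n -cosetX morph_order ?groupX //.
rewrite andbT order_dvdn -expgM mulnC expgM.
by rewrite -(expg_mod _ (expg_cardG Zyn)) chinese_modr // mod0n.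
Qed.

Theorem lemma2p4 (gT : finGroupType) (G Z : {group gT}) (C : {set coset_of Z}) :
  Z \subset 'Z(G) -> C \in classes (G / Z) ->
  (forall x, x \in G -> coset Z x \in C ->
     Kconnected G (x ^: G) -> Kconnected (G / Z) C) /\
  (forall c, c \in C -> coprime #[c] #|Z| ->
     exists2 x, x \in G & coset Z x \in C /\ #[x] = #[c]).
Proof.
move=> sZZG classC.
have nZG : G \subset 'N(Z) by apply/normal_norm/sub_center_normal.
split=> [x Gx Cx connG | c Cc co_cZ].
  have Nx := subsetP nZG x Gx.
  rewrite (class_eq_mem_classes classC Cx) -quotient_class //.
  by apply: Kconnected_morphim connG; rewrite ?class_subG.
have /morphimP [y Ny Gy def_c] : c \in G / Z.
  by case/imsetP: classC Cc => z GZz ->; apply/subsetP/class_subG.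
subst c.
have [x yx [xy ox]] := coset_lift_coprime_order Ny co_cZ.
rewrite -cycle_subG in Gy.
by exists x; [apply: (subsetP Gy) | rewrite xy].
Qed.
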